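(* Let $\mathcal F$ be a sheaf of finite-dimensional $\mathbb F$-vector spaces on a digraph $G$ and $\pi\colon G[\mathbb Z]\to G$ the universal Abelian covering. Then $h_1^{\rm twist}(\mathcal F)\neq0$ if and only if $H_1^\oplus(\pi^*\mathcal F)\neq0$. Moreover, if so, there is a nonzero $w\in H_1^\oplus(\pi^*\mathcal F)$ supported on edges of $G[\mathbb Z_{\ge0}]$, i.e. on edges $(e,n)$ with $n\in\mathbb Z_{\ge0}^{E_G}$.
   Context: A digraph $G$ has finite sets $V_G,E_G$ and tail/head maps $t_G,h_G$. A sheaf $\mathcal F$: finite-dimensional vector spaces $\mathcal F(P)$, $P\in V_G\sqcup E_G$, linear maps $\mathcal F(t,e)\colon\mathcal F(e)\to\mathcal F(t_Ge)$, $\mathcal F(h,e)\colon\mathcal F(e)\to\mathcal F(h_Ge)$; the same definition is used for sheaves on locally finite infinite digraphs. Twisting: with independent indeterminates $\psi(e)$, $e\in E_G$, $\mathcal F^\psi$ has values $\mathcal F(P)\otimes\mathbb F(\psi)$, head maps $\mathcal F(h,e)$, tail maps $\psi(e)\mathcal F(t,e)$; $h_1^{\rm twist}(\mathcal F)$ is the $\mathbb F(\psi)$-dimension of $\ker(d_h-d_t)$ on $\bigoplus_e\mathcal F^\psi(e)\to\bigoplus_v\mathcal F^\psi(v)$, where $d_h$ (resp. $d_t$) sends the summand of $e$ to that of $h_Ge$ (resp. $t_Ge$) via the head (resp. tail) map. The universal Abelian covering $G[\mathbb Z]$ has $V=V_G\times\mathbb Z^{E_G}$, $E=E_G\times\mathbb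 Z^{E_G}$, head $(e,n)\mapsto(h_Ge,n)$, tail $(e,n)\mapsto(t_Ge,n+\delta_e)$ with $\delta_e$ the indicator of $e$; $\pi$ is projection to the first coordinate, and $G[\mathbb Z_{\ge0}]$ is the subgraph with $n\in\mathbb Z_{\ge0}^{E_G}$. The pullback $\pi^*\mathcal F$ has values $\mathcal F(\pi(P))$ and restriction maps $\mathcal F(h,\pi(e)),\mathcal F(t,\pi(e))$. For a sheaf $\mathcal H$ on a locally finite infinite digraph, $H_1^\oplus(\mathcal H)$ is the kernel of $d=d_h-d_t\colon\bigoplus_e\mathcal H(e)\to\bigoplus_v\mathcal H(v)$ (finitely supported elements). *)

From HB Require Import structures.
From mathcomp Require Import all_boot all_order all_algebra.
From mathcomp Require Import fraction.
Set Implicit Arguments. Unset Strict Implicit. Unset Printing Implicit Defensive.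
Import GRing.Theory.
Local Open Scope ring_scope.

Record digraph := Digraph {
  vert : finType; edge : finType;
  tl : edge -> vert; hd : edge -> vert }.

(** A sheaf of finite-dimensional F-vector spaces on a digraph G.
    F(P) = F^(dim P) (row vectors); restriction maps are matrices acting
    on row vectors: x |-> x *m rt e  maps F(e) -> F(t e). *)
Record sheaf (F : fieldType) (G : digraph) := Sheaf {
  dV : vert G -> nat;
  dE : edge G -> nat;
  rt : forall e, 'M[F]_(dE e, dV (tl e));
  rh : forall e, 'M[F]_(dE e, dV (hd e)) }.

Definition mxnat (R : nmodType) m n (A : 'M[R]_(m, n)) (i j : nat) : R :=
  match (insub i : option 'I_m), (insub j : option 'I_n) with
  | Some i', Some j' => A i' j'
  | _, _ => 0
  end.

Section SheafMaps.
Variables (F : fieldType) (G : digraph) (S : sheaf F G).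

Definition resh (e : edge G) (v : vert G) : 'M[F]_(dE S e, dV S v) :=
  \matrix_(a, b) (if hd e == v then mxnat (rh S e) a b else 0).
Definition rest (e : edge G) (v : vert G) : 'M[F]_(dE S e, dV S v) :=
  \matrix_(a, b) (if tl e == v then mxnat (rt S e) a b else 0).
End SheafMaps.

Fixpoint mpoly (F : fieldType) (n : nat) : idomainType :=
  match n with 0 => F | k.+1 => {poly (mpoly F k)} end.

Fixpoint mconst (F : fieldType) (n : nat) : F -> mpoly F n :=
  match n return F -> mpoly F n with
  | 0 => fun x => x
  | k.+1 => fun x => (mconst k x)%:P
  end.

Fixpoint mvar (F : fieldType) (n : nat) : 'I_n -> mpoly F n :=
  match n return 'I_n -> mpoly F n with
  | 0 => fun _ => 0
  | k.+1 => fun i => match unlift ord_max i with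
                    | Some j => (mvar F j)%:P
                    | None => 'X
                    end
  end.

Section Twist.
Variables (F : fieldType) (G : digraph) (S : sheaf F G).

Definition Fpsi : fieldType := {fraction (mpoly F #|edge G|)}.
Definition iotaF (x : F) : Fpsi := tofrac (mconst #|edge G| x).
Definition psi (e : edge G) : Fpsi := tofrac (mvar F (enum_rank e)).

Definition ecoord := {e : edge G & 'I_(dE S e)}.
Definition vcoord := {v : vert G & 'I_(dV S v)}.

(** matrix of d_h - d_t on the twisted sheaf (row-vector convention) *)
Definition twist_bd : 'M[Fpsi]_(#|{: ecoord}|, #|{: vcoord}|) :=
  \matrix_(i, j)
    (let: ea := enum_val i in let: vb := enum_val j in
     iotaF (resh S (tag ea) (tag vb) (tagged ea) (tagged vb))
     - psi (tag ea) * iotaF (rest S (tag ea) (tag vb) (tagged ea) (tagged vb))).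

Definition h1_twist : nat := \rank (kermx twist_bd).

(** Chains on the universal Abelian covering G[Z] with coefficients in
    pi^* F: a value in F(e) for each edge (e, n), n in Z^{E_G}. *)
Definition cover_chain := forall e : edge G, {ffun edge G -> int} -> 'rV[F]_(dE S e).

Definition delta (e : edge G) : {ffun edge G -> int} := [ffun x => ((x == e) : nat)%:Z].

Definition fin_supp (w : cover_chain) : Prop :=
  exists s : seq (edge G * {ffun edge G -> int}),
    forall e n, w e n != 0 -> (e, n) \in s.

(** d w = 0, where (d w)(v,n) = sum over edges (e,n) with head (v,n) minus
    sum over edges (e, n - delta_e) with tail (t e, n) = (v, n). *)
Definition is_cover_cycle (w : cover_chain) : Prop :=
  forall (v : vert G) (n : {ffun edge G -> int}),
    \sum_(e : edge G) (w e n *m resh S e v - w e (n - delta e) *m rest S e v) = 0.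

Definition cover_nonzero (w : cover_chain) : Prop := exists e n, w e n != 0.

Definition supp_nonneg (w : cover_chain) : Prop :=
  forall e n, w e n != 0 -> forall x, (0 <= n x)%R.

Definition H1_cover_nonzero : Prop :=
  exists w : cover_chain, [/\ fin_supp w, is_cover_cycle w & cover_nonzero w].
End Twist.

From HB Require Import structures.
From mathcomp Require Import all_boot all_order all_algebra.
From mathcomp Require Import fraction generic_quotient.

(* Let A(psi) be the matrix of d_h - d_t on the twisted sheaf; its entries
   are the polynomials h_ij - psi(e_i) t_ij.  Then h_1^twist(F) <> 0 iff A
   has a nonzero left kernel vector over F(psi) iff, clearing denominators,
   there is a nonzero polynomial vector p with p A = 0.  Reading p as the
   chain w(e, n) = (coefficient of psi^n in p_e) on G[Z_{>=0}], extended by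
   0 to G[Z], turns multiplication by psi(e) into the deck shift
   n |-> n + delta_e, so the coefficient of psi^n in p A is the boundary of
   w at (v, n): p A = 0 iff w is a cycle, and w is finitely supported on
   G[Z_{>=0}].  Conversely a finitely supported cycle on G[Z] is translated
   by a deck transformation into a box of G[Z_{>=0}] and read back as p. *)

Set Implicit Arguments. Unset Strict Implicit. Unset Printing Implicit Defensive.
Import Order.TTheory GRing.Theory Num.Theory.
Local Open Scope ring_scope.
Local Open Scope quotient_scope.

Lemma tofrac_quotient (R : idomainType) (x : {fraction R}) :
  exists a b : R, b != 0 /\ x = tofrac a / tofrac b.
Proof.
elim/quotW: x => r.
exists (\n_r), (\d_r); split; first exact: denom_ratioP.
have d_neq0 : tofrac (\d_r) != 0 :> {fraction R}.
  by rewrite tofrac_eq0 denom_ratioP.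
apply: (canRL (mulfK d_neq0)).
have -> : tofrac (\d_r) = \pi_({fraction R}) (Ratio (\d_r) 1) by unlock tofrac.
have -> : tofrac (\n_r) = \pi_({fraction R}) (Ratio (\n_r) 1) by unlock tofrac.
rewrite -[LHS]/(FracField.mul _ _) -FracField.pi_mul.
apply/eqmodP; rewrite /= FracField.equivfE /FracField.mulf.
rewrite !numden_Ratio ?mulr1 ?denom_ratioP //; first by rewrite mulrC.
all: by rewrite oner_neq0.
Qed.

Section MultivariateCoefficients.
Variable F : fieldType.

Fixpoint mcoef (k : nat) : mpoly F k -> {ffun 'I_k -> nat} -> F :=
  match k return mpoly F k -> {ffun 'I_k -> nat} -> F with
  | 0 => fun p _ => p
  | k'.+1 => fun p m => mcoef (p`_(m ord_max)) [ffun j => m (lift ord_max j)]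
  end.

Definition mdec k (m : {ffun 'I_k -> nat}) (i : 'I_k) : {ffun 'I_k -> nat} :=
  [ffun j => if j == i then (m j).-1 else m j].

Definition mext k (m : {ffun 'I_k -> nat}) (n : nat) : {ffun 'I_k.+1 -> nat} :=
  [ffun i => if unlift ord_max i is Some j then m j else n].

Lemma mcoef0 k m : mcoef (0 : mpoly F k) m = 0.
Proof. by elim: k m => [|k IH] m //=; rewrite coef0 IH. Qed.

Lemma mcoefD k (p q : mpoly F k) m : mcoef (p + q) m = mcoef p m + mcoef q m.
Proof. by elim: k p q m => [|k IH] p q m //=; rewrite coefD IH. Qed.

Lemma mcoefB k (p q : mpoly F k) m : mcoef (p - q) m = mcoef p m - mcoef q m.
Proof. by elim: k p q m => [|k IH] p q m //=; rewrite coefB IH. Qed.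

Lemma mcoef_sum k (I : finType) (f : I -> mpoly F k) m :
  mcoef (\sum_i f i) m = \sum_i mcoef (f i) m.
Proof. exact: (big_morph (fun p => mcoef p m) (fun p q => mcoefD p q m) (mcoef0 m)). Qed.

Lemma mcoef_constM k c (p : mpoly F k) m : mcoef (mconst k c * p) m = c * mcoef p m.
Proof. by elim: k p m => [|k IH] p m //=; rewrite coefCM IH. Qed.

Lemma mcoef_varM k i (p : mpoly F k) m :
  mcoef (mvar F i * p) m = if m i is 0%N then 0 else mcoef p (mdec m i).
Proof.
elim: k i p m => [|k IH] i p m; first by case: i.
case: (unliftP ord_max i) => [j ->|->] /=.
  rewrite liftK coefCM IH ffunE.
  case: (m (lift ord_max j)) => [//|n]; congr mcoef.
    by rewrite /mdec ffunE (negbTE (neq_lift _ _)).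
  by apply/ffunP => j'; rewrite !ffunE (inj_eq (@lift_inj _ ord_max)).
rewrite unlift_none coefXM.
case E: (m ord_max) => [|n] /=; first exact: mcoef0.
rewrite /mdec ffunE eqxx E /=; congr mcoef; apply/ffunP => j'.
by rewrite !ffunE eq_sym (negbTE (neq_lift ord_max j')).
Qed.

Lemma mcoef_neq0 k (p : mpoly F k) : p != 0 -> exists m, mcoef p m != 0.
Proof.
elim: k p => [|k IH] p p_neq0; first by exists [ffun i => 0%N].
have : p`_(size p).-1 != 0 by rewrite -lead_coefE lead_coef_eq0.
move=> /IH [m' hm']; exists (mext m' (size p).-1) => /=.
rewrite /mext ffunE unlift_none.
by congr (_ != _): hm'; congr mcoef; apply/ffunP => j; rewrite !ffunE liftK.
Qed.

Fixpoint mbound (k : nat) : mpoly F k -> nat :=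
  match k return mpoly F k -> nat with
  | 0 => fun _ => 0%N
  | k'.+1 => fun p => maxn (size p) (\max_(n < size p) mbound (p`_n))
  end.

Lemma mboundP k (p : mpoly F k) m : mcoef p m != 0 -> forall i, (m i < mbound p)%N.
Proof.
elim: k p m => [|k IH] p m /=; first by move=> _ [].
set n := m ord_max => pm_neq0.
have n_lt_size : (n < size p)%N.
  by rewrite ltnNge; apply: contraNN pm_neq0 => ?; rewrite nth_default // mcoef0.
move=> i; case: (unliftP ord_max i) => [j ->|->]; last exact: leq_trans (leq_maxl _ _).
have := IH _ _ pm_neq0 j; rewrite ffunE => /leq_trans; apply.
apply: leq_trans (leq_maxr _ _).
exact: (leq_bigmax_cond (Ordinal n_lt_size)).
Qed.

Fixpoint mbuild (k : nat) : ({ffun 'I_k -> nat} -> F) -> nat -> mpoly F k :=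
  match k return ({ffun 'I_k -> nat} -> F) -> nat -> mpoly F k with
  | 0 => fun c _ => c [ffun i => 0%N]
  | k'.+1 => fun c B => \poly_(n < B) mbuild (fun m => c (mext m n)) B
  end.

Lemma mbuildP k (c : {ffun 'I_k -> nat} -> F) B :
  (forall m, c m != 0 -> forall i, (m i < B)%N) ->
  forall m, mcoef (mbuild c B) m = c m.
Proof.
elim: k c => [|k IH] c c_bounded m /=; first by congr c; apply/ffunP => -[].
rewrite coef_poly; case: ifP => m_lt_B.
  rewrite IH.
    congr c; apply/ffunP => i; rewrite !ffunE.
    by case: (unliftP ord_max i) => [j ->|->]; rewrite ?ffunE.
  by move=> m' /c_bounded bnd j; have := bnd (lift ord_max j); rewrite ffunE liftK.
rewrite mcoef0; have [//|/c_bounded/(_ ord_max)] := eqVneq (c m) 0.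
by rewrite m_lt_B.
Qed.

End MultivariateCoefficients.

Section ExponentVectors.
Variable G : digraph.
Local Notation lattice := {ffun edge G -> int}.
Local Notation N := #|edge G|.

(* The lattice points of Z^{E_G} lying in the orthant Z_{>=0}^{E_G}
   correspond to exponent vectors of monomials in the variables psi(e). *)
Definition nonneg (n : lattice) : bool := [forall x, 0 <= n x].

Definition expo (n : lattice) : {ffun 'I_N -> nat} :=
  [ffun k => absz (n (enum_val k))].

Definition unexpo (m : {ffun 'I_N -> nat}) : lattice :=
  [ffun x => (m (enum_rank x))%:Z].

Lemma expoK : cancel unexpo expo.
Proof. by move=> m; apply/ffunP => k; rewrite !ffunE enum_valK. Qed.

Lemma unexpoK n : nonneg n -> unexpo (expo n) = n.
Proof.
by move/forallP => n_ge0; apply/ffunP => x; rewrite !ffunE enum_rankK gez0_abs.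
Qed.

Lemma unexpo_nonneg m : nonneg (unexpo m).
Proof. by apply/forallP => x; rewrite ffunE. Qed.

Lemma subdeltaE (n : lattice) e x : (n - delta e) x = n x - ((x == e) : nat)%:Z.
Proof. by rewrite !ffunE. Qed.

Lemma nonneg_subdelta n e : ~~ nonneg n -> ~~ nonneg (n - delta e).
Proof.
move=> /forallPn [x n_lt0]; apply/forallPn; exists x.
rewrite subdeltaE -ltNge; rewrite -ltNge in n_lt0.
by apply: le_lt_trans n_lt0; rewrite gerBl; case: (x == e).
Qed.

Lemma nonneg_subdelta0 (n : lattice) e : n e = 0 -> ~~ nonneg (n - delta e).
Proof. by move=> ne0; apply/forallPn; exists e; rewrite subdeltaE ne0 eqxx. Qed.

Lemma expo_subdelta (n : lattice) e : nonneg n -> n e != 0 ->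
  nonneg (n - delta e) /\ expo (n - delta e) = mdec (expo n) (enum_rank e).
Proof.
move=> /forallP n_ge0 ne_neq0; have ne_gt0 : 0 < n e by rewrite lt0r ne_neq0 n_ge0.
split.
  apply/forallP => x; rewrite subdeltaE.
  by have [->|_] := eqVneq x e; rewrite ?subr_ge0 ?subr0.
apply/ffunP => k; rewrite !ffunE -(inj_eq enum_val_inj) enum_rankK.
have [->|_] := eqVneq (enum_val k) e; last by rewrite subr0.
by case: (n e) ne_gt0 => [[|j]|] //= _; rewrite subn1.
Qed.

Lemma coef_subdelta (R : nmodType) (q : {ffun 'I_N -> nat} -> R) n e :
  nonneg n ->
  (if nonneg (n - delta e) then q (expo (n - delta e)) else 0) =
  (if expo n (enum_rank e) is 0%N then 0 else q (mdec (expo n) (enum_rank e))).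
Proof.
move=> n_ge0; rewrite ffunE enum_rankK.
have [ne0|ne_neq0] := eqVneq (n e) 0; first by rewrite (negbTE (nonneg_subdelta0 ne0)) ne0.
have [-> ->] := expo_subdelta n_ge0 ne_neq0.
by case: (n e) ne_neq0 (forallP n_ge0 e) => [[|j]|].
Qed.

End ExponentVectors.

Section PolynomialCycles.
Variables (F : fieldType) (G : digraph) (S : sheaf F G).
Local Notation N := #|edge G|.
Local Notation P := (mpoly F #|edge G|).
Local Notation Ec := (ecoord S).
Local Notation Vc := (vcoord S).

Definition hentry (i : Ec) (j : Vc) : F := resh S (tag i) (tag j) (tagged i) (tagged j).
Definition tentry (i : Ec) (j : Vc) : F := rest S (tag i) (tag j) (tagged i) (tagged j).

Definition twist_poly (i : Ec) (j : Vc) : P :=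
  mconst N (hentry i j) - mvar F (enum_rank (tag i)) * mconst N (tentry i j).

Definition poly_cycle (p : Ec -> P) : Prop := forall j, \sum_i p i * twist_poly i j = 0.

Lemma twist_bdE i j : twist_bd S (enum_rank i) (enum_rank j) = tofrac (twist_poly i j).
Proof. by rewrite mxE !enum_rankK /iotaF /psi tofracB tofracM. Qed.

Lemma mul_twist_bdE (x : 'rV_#|{:Ec}|) j :
  (x *m twist_bd S) 0 (enum_rank j) =
  \sum_(i : Ec) x 0 (enum_rank i) * tofrac (twist_poly i j).
Proof.
rewrite mxE (reindex enum_rank) /=; last exact: (onW_bij _ (@enum_rank_bij _)).
by apply: eq_bigr => i _; rewrite twist_bdE.
Qed.

Lemma h1_twist_neq0P :
  h1_twist S != 0%N <-> exists2 x : 'rV_#|{:Ec}|, x != 0 & x *m twist_bd S = 0.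
Proof.
rewrite /h1_twist mxrank_eq0; split=> [/rowV0Pn [x /sub_kermxP x_ker x_neq0]|].
  by exists x.
by case=> x x_neq0 x_ker; apply/rowV0Pn; exists x => //; apply/sub_kermxP.
Qed.

Lemma poly_cycle_kernel (p : Ec -> P) : (exists i, p i != 0) -> poly_cycle p ->
  exists2 x : 'rV_#|{:Ec}|, x != 0 & x *m twist_bd S = 0.
Proof.
case=> i0 pi0_neq0 p_cycle; exists (\row_k tofrac (p (enum_val k))).
  apply/rV0Pn; exists (enum_rank i0).
  by rewrite mxE enum_rankK tofrac_eq0.
apply/rowP => k; rewrite -(enum_valK k) mul_twist_bdE mxE.
under eq_bigr do rewrite mxE enum_rankK -tofracM.
by rewrite -(big_morph _ (@tofracD _) (@tofrac0 _)) p_cycle tofrac0.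
Qed.

(* clearing denominators in a left-kernel vector over F(psi) *)
Lemma kernel_poly_cycle (x : 'rV_#|{:Ec}|) : x != 0 -> x *m twist_bd S = 0 ->
  exists2 p : Ec -> P, exists i, p i != 0 & poly_cycle p.
Proof.
move=> x_neq0 x_ker.
have /fin_all_exists [u xE] : forall k, exists u : P * P,
    u.2 != 0 /\ x 0 k = tofrac u.1 / tofrac u.2.
  by move=> k; have [a [b [b_neq0 ->]]] := tofrac_quotient (x 0 k); exists (a, b).
pose D := \prod_k (u k).2.
have D_neq0 : D != 0 by apply/prodf_neq0 => k _; case: (xE k).
pose p i := (u (enum_rank i)).1 * \prod_(k | k != enum_rank i) (u k).2.
have pE i : tofrac (p i) = x 0 (enum_rank i) * tofrac D.
  have [den_neq0 ->] := xE (enum_rank i).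
  rewrite /D (bigD1 (enum_rank i)) //= !tofracM mulrA divfK //.
  by rewrite tofrac_eq0.
exists p.
  have /rV0Pn [k xk_neq0] := x_neq0.
  exists (enum_val k); rewrite -tofrac_eq0 pE enum_valK mulf_neq0 //.
  by rewrite tofrac_eq0.
move=> j; apply/eqP; rewrite -tofrac_eq0 (big_morph _ (@tofracD _) (@tofrac0 _)).
under eq_bigr do rewrite tofracM pE mulrAC.
by rewrite -mulr_suml -mul_twist_bdE x_ker mxE mul0r.
Qed.

Lemma h1_twist_poly_cycle :
  h1_twist S != 0%N <-> exists2 p : Ec -> P, exists i, p i != 0 & poly_cycle p.
Proof.
split=> [/h1_twist_neq0P [x]|[p] p_neq0 /(poly_cycle_kernel p_neq0)].
  exact: kernel_poly_cycle.
by move/h1_twist_neq0P.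
Qed.

End PolynomialCycles.

Section CoverChains.
Variables (F : fieldType) (G : digraph) (S : sheaf F G).
Local Notation P := (mpoly F #|edge G|).
Local Notation Ec := (ecoord S).
Local Notation lattice := {ffun edge G -> int}.
Local Notation ecoord_of a := (Tagged (fun e => 'I_(dE S e)) a).
Local Notation vcoord_of b := (Tagged (fun v => 'I_(dV S v)) b).

Definition cover_boundary (w : cover_chain S) (v : vert G) (n : lattice) :=
  \sum_(e : edge G) (w e n *m resh S e v - w e (n - delta e) *m rest S e v).

Lemma cover_boundaryE w v n b :
  cover_boundary w v n 0 b =
  \sum_(i : Ec) (w (tag i) n 0 (tagged i) * hentry i (vcoord_of b)
     - w (tag i) (n - delta (tag i)) 0 (tagged i) * tentry i (vcoord_of b)).
Proof.
pose f e (a : 'I_(dE S e)) :=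
  w e n 0 a * resh S e v a b - w e (n - delta e) 0 a * rest S e v a b.
transitivity (\sum_e \sum_a f e a).
  rewrite summxE; apply: eq_bigr => e _; rewrite !mxE sumrB.
  by congr (_ - _); apply: eq_bigr => a _; rewrite !mxE.
by rewrite (sig_big_dep xpredT (fun _ => xpredT) f).
Qed.

Lemma mcoef_twist_column (p : Ec -> P) j m :
  mcoef (\sum_i p i * twist_poly i j) m =
  \sum_i (mcoef (p i) m * hentry i j -
     (if m (enum_rank (tag i)) is 0%N then 0
      else mcoef (p i) (mdec m (enum_rank (tag i)))) * tentry i j).
Proof.
rewrite mcoef_sum; apply: eq_bigr => i _.
rewrite mulrBr mcoefB [p i * mconst _ _]mulrC mcoef_constM mulrC.
rewrite [p i * _]mulrCA mcoef_varM.
case: (m _) => [|n]; first by rewrite mul0r.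
by rewrite [p i * mconst _ _]mulrC mcoef_constM [tentry i j * _]mulrC.
Qed.

Definition coef_chain (p : Ec -> P) (w : cover_chain S) : Prop :=
  forall e n (a : 'I_(dE S e)),
    w e n 0 a = if nonneg n then mcoef (p (ecoord_of a)) (expo n) else 0.

Section CoefChain.
Variables (p : Ec -> P) (w : cover_chain S).
Hypothesis pw : coef_chain p w.

Lemma coef_chain_supp e n : w e n != 0 ->
  nonneg n /\ exists a : 'I_(dE S e), mcoef (p (ecoord_of a)) (expo n) != 0.
Proof.
case/rV0Pn => a; rewrite pw; case: ifP => [n_ge0 pa_neq0|_]; last by rewrite eqxx.
by split; last exists a.
Qed.

Lemma coef_chain_out e n : ~~ nonneg n -> w e n = 0.
Proof. by move=> n_lt0; apply/eqP; apply: contraNT n_lt0 => /coef_chain_supp []. Qed.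

(* multiplication by psi(e) is the deck shift n |-> n + delta_e, so the
   coefficients of p A(psi) are the values of the boundary of w *)
Lemma coef_chain_boundary v b m :
  cover_boundary w v (unexpo m) 0 b =
  mcoef (\sum_i p i * twist_poly i (vcoord_of b)) m.
Proof.
rewrite cover_boundaryE mcoef_twist_column; apply: eq_bigr => -[e a] _ /=.
by rewrite !pw unexpo_nonneg expoK (coef_subdelta _ _ (unexpo_nonneg m)) expoK.
Qed.

Lemma coef_chain_boundary_out v n : ~~ nonneg n -> cover_boundary w v n = 0.
Proof.
move=> n_lt0; rewrite /cover_boundary big1 // => e _.
by rewrite !coef_chain_out ?nonneg_subdelta // !mul0mx subr0.
Qed.

Lemma coef_chain_cycle : poly_cycle p <-> is_cover_cycle w.
Proof.
split=> [p_cycle v n|w_cycle [v b]].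
  have [n_ge0|] := boolP (nonneg n); last exact: coef_chain_boundary_out.
  apply/rowP => b; rewrite -(unexpoK n_ge0) coef_chain_boundary p_cycle.
  by rewrite mcoef0 mxE.
apply/eqP/negPn/negP => /mcoef_neq0 [m].
by rewrite -coef_chain_boundary [cover_boundary _ _ _]w_cycle mxE eqxx.
Qed.

Lemma coef_chain_nonzero : (exists i, p i != 0) <-> cover_nonzero w.
Proof.
split=> [[[e a] /mcoef_neq0 [m pm_neq0]]|[e [n /coef_chain_supp [_ [a pa_neq0]]]]].
  exists e, (unexpo m); apply/rV0Pn; exists a.
  by rewrite pw unexpo_nonneg expoK.
by exists (ecoord_of a); apply: contraNneq pa_neq0 => ->; rewrite mcoef0.
Qed.

Lemma coef_chain_nonneg : supp_nonneg w.
Proof. by move=> e n /coef_chain_supp [/forallP]. Qed.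

Lemma coef_chain_fin_supp : fin_supp w.
Proof.
pose B := \max_(i : Ec) mbound (p i).
pose lat (f : {ffun edge G -> 'I_B.+1}) : lattice := [ffun x => (f x : nat)%:Z].
exists [seq (e, lat f) | e <- enum (edge G), f <- enum {ffun edge G -> 'I_B.+1}].
move=> e n /coef_chain_supp [n_ge0 [a pa_neq0]].
have n_small x : (absz (n x) < B.+1)%N.
  have := mboundP pa_neq0 (enum_rank x); rewrite ffunE enum_rankK ltnS => /ltnW.
  by move/leq_trans; apply; apply: leq_bigmax.
have -> : n = lat [ffun x => inord (absz (n x))].
  by apply/ffunP => x; rewrite !ffunE inordK // gez0_abs //; apply: (forallP n_ge0).
by apply: allpairs_f; rewrite mem_enum.
Qed.

End CoefChain.

Definition poly_chain (p : Ec -> P) : cover_chain S := fun e n =>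
  \row_a (if nonneg n then mcoef (p (ecoord_of a)) (expo n) else 0).

Lemma poly_chainP p : coef_chain p (poly_chain p).
Proof. by move=> e n a; rewrite mxE. Qed.

Definition supp_box (B : nat) (w : cover_chain S) : Prop :=
  forall e n, w e n != 0 -> forall x, 0 <= n x < B%:Z.

Definition chain_poly (w : cover_chain S) (B : nat) (i : Ec) : P :=
  mbuild (fun m => w (tag i) (unexpo m) 0 (tagged i)) B.

Lemma chain_polyP w B : supp_box B w -> coef_chain (chain_poly w B) w.
Proof.
move=> w_box e n a; rewrite /chain_poly.
have [n_ge0|n_lt0] := ifPn; last first.
  apply/eqP; apply: contraNT n_lt0 => wna_neq0; apply/forallP => x.
  have wn_neq0 : w e n != 0 by apply/rV0Pn; exists a.
  by have /andP[] := w_box e n wn_neq0 x.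
rewrite mbuildP /= ?unexpoK // => m wm_neq0 k.
have wm_neq0' : w e (unexpo m) != 0 by apply/rV0Pn; exists a.
by have /andP[_] := w_box _ _ wm_neq0' (enum_val k); rewrite ffunE enum_valK ltz_nat.
Qed.

End CoverChains.

Section Translation.
Variables (F : fieldType) (G : digraph) (S : sheaf F G).
Local Notation lattice := {ffun edge G -> int}.

Definition translate (w : cover_chain S) (k : lattice) : cover_chain S :=
  fun e n => w e (n - k).

Lemma translate_cycle w k : is_cover_cycle w -> is_cover_cycle (translate w k).
Proof.
move=> w_cycle v n; rewrite /translate.
under eq_bigr do rewrite [_ - delta _ - k]addrAC.
exact: w_cycle.
Qed.

Lemma translate_nonzero w k : cover_nonzero w -> cover_nonzero (translate w k).
Proof. by case=> e [n wn_neq0]; exists e, (n + k); rewrite /translate addrK. Qed.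

Lemma fin_supp_bounded (w : cover_chain S) : fin_supp w ->
  exists K : nat, forall e n, w e n != 0 -> forall x, (`|n x| <= K)%N.
Proof.
case=> s w_supp; exists (\max_(z <- s) \max_x `|z.2 x|)%N => e n /w_supp n_in_s x.
apply: leq_trans (@leq_bigmax_seq _ s xpredT
  (fun z : edge G * lattice => \max_x `|z.2 x|)%N _ n_in_s isT).
exact: (@leq_bigmax _ (fun x => `|n x|)%N x).
Qed.

Lemma translate_box (w : cover_chain S) (K : nat) :
  (forall e n, w e n != 0 -> forall x, (`|n x| <= K)%N) ->
  supp_box (2 * K).+1 (translate w [ffun => K%:Z]).
Proof.
move=> w_bounded e n /w_bounded bnd x; move: (bnd x).
rewrite !ffunE -lez_nat abszE ler_norml => /andP [lo hi].
rewrite -(lerD2r (- K%:Z)) add0r lo /= -addn1 PoszD ltzD1 mul2n -addnn PoszD.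
by rewrite -lerBlDr.
Qed.

Lemma cover_cycle_in_box : H1_cover_nonzero S ->
  exists B (w : cover_chain S), [/\ supp_box B w, is_cover_cycle w & cover_nonzero w].
Proof.
case=> w [/fin_supp_bounded [K w_bounded] w_cycle w_neq0].
exists (2 * K).+1, (translate w [ffun => K%:Z]); split.
- exact: translate_box.
- exact: translate_cycle.
- exact: translate_nonzero.
Qed.

End Translation.

Section Main.
Variables (F : fieldType) (G : digraph) (S : sheaf F G).

Lemma twist_to_cover : h1_twist S != 0%N ->
  exists w : cover_chain S,
    [/\ fin_supp w, is_cover_cycle w, cover_nonzero w & supp_nonneg w].
Proof.
move=> /h1_twist_poly_cycle [p p_neq0 p_cycle].
have pw := poly_chainP p.
exists (poly_chain p); split.
- exact: coef_chain_fin_supp pw.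
- exact/(coef_chain_cycle pw).
- exact/(coef_chain_nonzero pw).
- exact: coef_chain_nonneg pw.
Qed.

Lemma cover_to_twist : H1_cover_nonzero S -> h1_twist S != 0%N.
Proof.
case/cover_cycle_in_box => B [w [w_box w_cycle w_neq0]].
have pw := chain_polyP w_box.
apply/h1_twist_poly_cycle; exists (chain_poly w B).
- exact/(coef_chain_nonzero pw).
- exact/(coef_chain_cycle pw).
Qed.

End Main.

Theorem lemma1 (F : fieldType) (G : digraph) (S : sheaf F G) :
  (h1_twist S <> 0%N <-> H1_cover_nonzero S) /\
  (h1_twist S <> 0%N ->
     exists w : cover_chain S,
       [/\ fin_supp w, is_cover_cycle w, cover_nonzero w & supp_nonneg w]).
Proof.
split; first split.
- by move=> /eqP/twist_to_cover [w [w_fin w_cycle w_neq0 _]]; exists w.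
- by move=> /cover_to_twist/eqP.
- by move=> /eqP/twist_to_cover.
Qed.
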